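(* Let $M=(M_{ij})_{1\le i,j\le d}$ be a $d\times d$ real matrix with nonnegative coefficients, acting on row vectors by $x\mapsto xM$, and let $C=[0,\infty)^d\setminus\{0\}$. Then: (i) $M(C)\subset C$ if and only if each row of $M$ has a nonzero coefficient; (ii) if $M(C)\subset C$, then $c(M)<1$ if and only if for every pair $(i,j)$ with $M_{ij}=0$, the whole $j$-th column of $M$ is zero.
   Context: Coordinatewise order on $\mathbb{R}^d$. For $x,y\in C$: $\aleph(x,y)=\sup\{b\ge0\mid bx\le y\}$, $m(x,y)=\aleph(x,y)\aleph(y,x)$. On the set $\Pi(C)$ of open half-lines $\{bx:b>0\}$, $x\in C$, define $d(\bar x,\bar y)=\frac{1-m(x,y)}{1+m(x,y)}$ for representatives $x,y$. When $M(C)\subset C$, $M$ acts on $\Pi(C)$ by $M\cdot\Pi(x)=\Pi(xM)$, and $c(M)=\sup\{d(M\cdot\bar x,M\cdot\bar y)\mid\bar x,\bar y\in\Pi(C)\}$. *)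

From HB Require Import structures.
From mathcomp Require Import all_boot all_order all_algebra.
From mathcomp Require Import all_classical all_reals.
Set Implicit Arguments. Unset Strict Implicit. Unset Printing Implicit Defensive.
Import Order.TTheory GRing.Theory Num.Theory.
Local Open Scope classical_set_scope.
Local Open Scope ring_scope.

Definition inC (R : realType) (d : nat) (x : 'rV[R]_d) : Prop :=
  (forall i, 0 <= x 0 i) /\ x <> 0.

Definition aleph (R : realType) (d : nat) (x y : 'rV[R]_d) : R :=
  sup [set b : R | 0 <= b /\ forall i, b * x 0 i <= y 0 i].

Definition mm (R : realType) (d : nat) (x y : 'rV[R]_d) : R :=
  aleph x y * aleph y x.

(* the distance on half-lines, computed on representatives *)
Definition dist (R : realType) (d : nat) (x y : 'rV[R]_d) : R :=
  (1 - mm x y) / (1 + mm x y).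

Definition preservesC (R : realType) (d : nat) (M : 'M[R]_d) : Prop :=
  forall x : 'rV[R]_d, inC x -> inC (x *m M).

(* c(M) = sup { d(M.x̄, M.ȳ) } ; half-lines are represented by points of C,
   and M . Pi(x) = Pi(xM). *)
Definition contraction (R : realType) (d : nat) (M : 'M[R]_d) : R :=
  sup [set t : R | exists x y : 'rV[R]_d,
         inC x /\ inC y /\ t = dist (x *m M) (y *m M)].

From HB Require Import structures.
From mathcomp Require Import all_boot all_order all_algebra.
From mathcomp Require Import all_classical all_reals.
From mathcomp Require Import ring lra.
Set Implicit Arguments. Unset Strict Implicit. Unset Printing Implicit Defensive.
Import Order.TTheory GRing.Theory Num.Theory.
Local Open Scope ring_scope.
Local Open Scope classical_set_scope.

(* (i) The image of the unit vector e_i is the i-th row of M, and a nonnegative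
   combination of rows with a positive coefficient is nonzero as soon as every
   row is.
   (ii) If M_ij = 0 < M_kj, then aleph(row k, row i) = 0, so the images of e_i
   and e_k are at distance 1 and c(M) = 1.  Conversely, if every column is
   either zero or has all its entries in [a, b] with a > 0, then every nonzero
   coordinate of xM lies between a|x| and b|x|, where |x| is the sum of the
   coordinates of x; hence aleph(xM, yM) >= a|y| / (b|x|), m(xM, yM) >= (a/b)^2
   and c(M) <= (1 - (a/b)^2) / (1 + (a/b)^2) < 1. *)

Section FiniteBounds.
Variable R : realType.

Lemma exists_pos_lbound (I : finType) (F : I -> R) :
  exists2 a : R, 0 < a <= 1 & forall i, 0 < F i -> a <= F i.
Proof.
exists (\big[Order.min/1]_(i | 0 < F i) F i); last by move=> i; exact: bigmin_le_cond.
by rewrite bigmin_le_id andbT; apply/bigmin_gtP; split=> [|i]; first exact: ltr01.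
Qed.

Lemma exists_ge1_ubound (I : finType) (F : I -> R) :
  exists2 b : R, 1 <= b & forall i, F i <= b.
Proof.
exists (\big[Order.max/1]_i F i); last by move=> i; exact: le_bigmax.
exact: bigmax_ge_id.
Qed.

End FiniteBounds.

Section Cone.
Variables (R : realType) (d : nat).
Implicit Types (u v x y : 'rV[R]_d) (M : 'M[R]_d).

Definition mass x : R := \sum_k x 0 k.

Lemma inC_exists_gt0 u : inC u -> exists j, 0 < u 0 j.
Proof.
case=> u_ge0 u_neq0; apply/not_existsP => u_le0; apply: u_neq0.
apply/matrixP => i j; rewrite ord1 !mxE; apply/eqP; rewrite eq_le u_ge0 andbT.
by rewrite leNgt; apply/negP => /u_le0.
Qed.

Lemma mass_gt0 x : inC x -> 0 < mass x.
Proof.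
move=> Cx; have [i xi_gt0] := inC_exists_gt0 Cx; have [x_ge0 _] := Cx.
by apply: lt_le_trans xi_gt0 _; rewrite /mass (bigD1 i) //= lerDl sumr_ge0.
Qed.

Lemma delta_mx_inC i : inC (delta_mx 0 i : 'rV[R]_d).
Proof.
split=> [k|/matrixP /(_ 0 i)]; rewrite !mxE ?ler0n //.
by rewrite !eqxx /= => /eqP; rewrite oner_eq0.
Qed.

Lemma row_inC M i : preservesC M -> inC (row i M).
Proof. by move=> PM; rewrite rowE; apply/PM/delta_mx_inC. Qed.

Lemma aleph_has_ubound u v :
  inC u -> has_ubound [set b : R | 0 <= b /\ forall i, b * u 0 i <= v 0 i].
Proof.
move=> /inC_exists_gt0 [j uj_gt0]; exists (v 0 j / u 0 j) => b [_ /(_ j) le_buv].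
by rewrite ler_pdivlMr.
Qed.

Lemma aleph_ge u v b :
  inC u -> 0 <= b -> (forall i, b * u 0 i <= v 0 i) -> b <= aleph u v.
Proof. by move=> Cu b_ge0 le_buv; apply: (ub_le_sup (aleph_has_ubound v Cu)). Qed.

Lemma aleph_ge0 u v : inC u -> inC v -> 0 <= aleph u v.
Proof. by move=> Cu [v_ge0 _]; apply: aleph_ge => // i; rewrite mul0r. Qed.

Lemma aleph_eq0 u v j :
  inC u -> inC v -> 0 < u 0 j -> v 0 j = 0 -> aleph u v = 0.
Proof.
move=> Cu Cv uj_gt0 vj0; apply/eqP; rewrite eq_le aleph_ge0 // andbT.
apply: ge_sup => [|b [_ /(_ j)]]; last by rewrite vj0 pmulr_lle0.
by exists 0; split=> // i; rewrite mul0r; case: Cv.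
Qed.

Lemma mm_ge0 u v : inC u -> inC v -> 0 <= mm u v.
Proof. by move=> Cu Cv; rewrite mulr_ge0 // aleph_ge0. Qed.

Lemma dist_le u v r :
  inC u -> inC v -> 0 <= r -> r <= mm u v -> dist u v <= (1 - r) / (1 + r).
Proof.
move=> Cu Cv r_ge0 le_rm; have := mm_ge0 Cu Cv; rewrite /dist; set m := mm u v.
move=> m_ge0; rewrite ler_pdivrMr; last lra.
rewrite mulrAC ler_pdivlMr; last lra.
rewrite -subr_ge0.
have -> : (1 - r) * (1 + m) - (1 - m) * (1 + r) = 2 * (m - r) by ring.
by rewrite mulr_ge0 // subr_ge0.
Qed.

Lemma dist_le1 u v : inC u -> inC v -> dist u v <= 1.
Proof.
move=> Cu Cv; have := dist_le Cu Cv (lexx 0) (mm_ge0 Cu Cv).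
by rewrite subr0 addr0 divr1.
Qed.

Lemma dist_aleph_eq0 u v : aleph u v = 0 -> dist u v = 1.
Proof. by rewrite /dist /mm => ->; rewrite mul0r subr0 addr0 divr1. Qed.

Lemma dist_le_contraction M x y :
  preservesC M -> inC x -> inC y -> dist (x *m M) (y *m M) <= contraction M.
Proof.
move=> PM Cx Cy; apply: ub_le_sup; last by exists x, y.
by exists 1 => _ [u [v [Cu [Cv ->]]]]; apply: dist_le1; apply: PM.
Qed.

Lemma contraction_le M q :
  0 <= q -> (forall x y, inC x -> inC y -> dist (x *m M) (y *m M) <= q) ->
  contraction M <= q.
Proof.
move=> q_ge0 le_dist_q; rewrite /contraction; set S := [set t | _].
have [S_neq0|S_empty] := pselect (S !=set0).
  by apply: ge_sup => // _ [x [y [Cx [Cy ->]]]]; apply: le_dist_q.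
by rewrite sup_out // => -[].
Qed.

End Cone.

Section NonnegMatrix.
Variables (R : realType) (d : nat) (M : 'M[R]_d).
Hypothesis M_ge0 : forall i j, 0 <= M i j.
Implicit Types x y : 'rV[R]_d.

Lemma mulmx_ge0 x j : (forall k, 0 <= x 0 k) -> 0 <= (x *m M) 0 j.
Proof. by move=> x_ge0; rewrite mxE sumr_ge0 // => k _; rewrite mulr_ge0. Qed.

Lemma preservesC_rows : preservesC M <-> (forall i, exists j, M i j != 0).
Proof.
split=> [PM i | rowsM x Cx].
  have [j] := inC_exists_gt0 (row_inC i PM); rewrite mxE => Mij_gt0.
  by exists j; rewrite gt_eqF.
have [x_ge0 _] := Cx; split=> [j|]; first exact: mulmx_ge0.
have [i xi_gt0] := inC_exists_gt0 Cx; have [j Mij_neq0] := rowsM i.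
move/matrixP/(_ 0 j)/eqP; rewrite !mxE; apply/negP; rewrite gt_eqF //.
have xMij_gt0 : 0 < x 0 i * M i j by rewrite mulr_gt0 // lt0r Mij_neq0 M_ge0.
apply: lt_le_trans xMij_gt0 _.
by rewrite (bigD1 i) //= lerDl sumr_ge0 // => k _; rewrite mulr_ge0.
Qed.

Lemma columns_zero_or_bounded :
  (forall i j, M i j = 0 -> forall k, M k j = 0) ->
  exists a b : R, [/\ 0 < a, a <= b &
    forall j, (forall k, M k j = 0) \/ (forall k, a <= M k j <= b)].
Proof.
move=> zero_cols.
have [a /andP[a_gt0 a_le1] le_aM] := exists_pos_lbound (fun p : 'I_d * 'I_d => M p.1 p.2).
have [b b_ge1 le_Mb] := exists_ge1_ubound (fun p : 'I_d * 'I_d => M p.1 p.2).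
exists a, b; split=> [||j]; [done | exact: le_trans a_le1 b_ge1 |].
have [[i /zero_cols]|Mj_neq0] := pselect (exists i, M i j = 0); first by left.
right=> k; rewrite (le_Mb (k, j)) andbT (le_aM (k, j)) // lt0r M_ge0 andbT.
by apply/eqP => Mkj0; apply: Mj_neq0; exists k.
Qed.

Lemma mulmx_col_ge x j a :
  (forall k, 0 <= x 0 k) -> (forall k, a <= M k j) -> a * mass x <= (x *m M) 0 j.
Proof.
move=> x_ge0 le_aM; rewrite mxE /mass mulr_sumr; apply: ler_sum => k _.
by rewrite mulrC ler_wpM2l.
Qed.

Lemma mulmx_col_le x j b :
  (forall k, 0 <= x 0 k) -> (forall k, M k j <= b) -> (x *m M) 0 j <= b * mass x.
Proof.
move=> x_ge0 le_Mb; rewrite mxE /mass mulr_sumr; apply: ler_sum => k _.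
by rewrite mulrC ler_wpM2r.
Qed.

Section BoundedColumns.
Variables a b : R.
Hypotheses (a_gt0 : 0 < a) (b_gt0 : 0 < b).
Hypothesis cols : forall j, (forall k, M k j = 0) \/ (forall k, a <= M k j <= b).
Hypothesis PM : preservesC M.

Lemma aleph_mulmx_ge x y : inC x -> inC y ->
  a * mass y / (b * mass x) <= aleph (x *m M) (y *m M).
Proof.
move=> Cx Cy; have [x_ge0 _] := Cx; have [y_ge0 _] := Cy.
have bx_gt0 : 0 < b * mass x by rewrite mulr_gt0 // mass_gt0.
have c_ge0 : 0 <= a * mass y / (b * mass x).
  by rewrite ltW // divr_gt0 // mulr_gt0 // mass_gt0.
apply: (aleph_ge (PM Cx) c_ge0) => j.
have [Mj0|Mj_bd] := cols j.
  by rewrite !mxE !big1 ?mulr0 // => k _; rewrite Mj0 mulr0.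
apply: le_trans (mulmx_col_ge y_ge0 (fun k => (andP (Mj_bd k)).1)).
apply: le_trans (ler_wpM2l c_ge0 (mulmx_col_le x_ge0 (fun k => (andP (Mj_bd k)).2))) _.
by rewrite mulrVK // unitfE gt_eqF.
Qed.

Lemma mm_mulmx_ge x y : inC x -> inC y -> (a / b) ^+ 2 <= mm (x *m M) (y *m M).
Proof.
move=> Cx Cy; have mx_gt0 := mass_gt0 Cx; have my_gt0 := mass_gt0 Cy.
apply: le_trans (ler_pM _ _ (aleph_mulmx_ge Cx Cy) (aleph_mulmx_ge Cy Cx)).
- by rewrite le_eqVlt; apply/orP; left; apply/eqP; field; rewrite !gt_eqF.
- by rewrite ltW // divr_gt0 // mulr_gt0.
- by rewrite ltW // divr_gt0 // mulr_gt0.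
Qed.

End BoundedColumns.

Lemma contraction_lt1 : preservesC M ->
  (forall i j, M i j = 0 -> forall k, M k j = 0) -> contraction M < 1.
Proof.
move=> PM zero_cols.
have [a [b [a_gt0 le_ab cols]]] := columns_zero_or_bounded zero_cols.
have b_gt0 : 0 < b := lt_le_trans a_gt0 le_ab.
set r := (a / b) ^+ 2.
have r_gt0 : 0 < r by rewrite exprn_gt0 // divr_gt0.
have r_le1 : r <= 1.
  by rewrite exprn_ile1 ?divr_ge0 ?(ltW a_gt0) ?(ltW b_gt0) // ler_pdivrMr // mul1r.
apply: (@le_lt_trans _ _ ((1 - r) / (1 + r))).
  apply: contraction_le => [|x y Cx Cy]; first by rewrite divr_ge0 //; lra.
  exact: dist_le (PM _ Cx) (PM _ Cy) (ltW r_gt0) (mm_mulmx_ge a_gt0 b_gt0 cols PM Cx Cy).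
by rewrite ltr_pdivrMr; lra.
Qed.

Lemma contraction_lt1_zero_columns : preservesC M -> contraction M < 1 ->
  forall i j, M i j = 0 -> forall k, M k j = 0.
Proof.
move=> PM c_lt1 i j Mij0 k; apply/eqP; rewrite eq_le M_ge0 andbT leNgt.
apply/negP => Mkj_gt0.
have : dist (row k M) (row i M) <= contraction M.
  by rewrite !rowE; apply: dist_le_contraction => //; exact: delta_mx_inC.
rewrite dist_aleph_eq0; first by rewrite leNgt c_lt1.
by apply: (aleph_eq0 (j := j)); first [exact: row_inC | rewrite mxE].
Qed.

End NonnegMatrix.

Theorem mainTheorem8 (R : realType) (d : nat) (M : 'M[R]_d) :
  (forall i j, 0 <= M i j) ->
  (preservesC M <-> (forall i, exists j, M i j != 0)) /\
  (preservesC M ->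
     (contraction M < 1 <->
      (forall i j, M i j = 0 -> forall k, M k j = 0))).
Proof.
move=> M_ge0; split; first exact: preservesC_rows.
move=> PM; split; first exact: contraction_lt1_zero_columns.
exact: contraction_lt1.
Qed.
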